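(* Let $F$ be a field of characteristic $2$ and let $q=\langle a_1,\dots,a_n\rangle$ be a totally singular quadratic form over $F$ with not all $a_i=0$. Let $L/F$ be a finite field extension, $\lambda\in L^*$ and $K=F(\lambda)$. If $\lambda\in G_L(q_L)$, then $K/F$ is separable or $L/K$ is inseparable.
   Context: $\langle a_1,\dots,a_n\rangle$ denotes $a_1x_1^2+\dots+a_nx_n^2$. $G_L(q_L)=\{c\in L^*: q_L\cong cq_L\}$ is the group of similarity factors of $q_L$. *)

From HB Require Import structures.
From mathcomp Require Import all_boot all_order all_algebra all_field.
Set Implicit Arguments. Unset Strict Implicit. Unset Printing Implicit Defensive.
Import GRing.Theory.
Local Open Scope ring_scope.

Definition qformL (F : fieldType) (L : fieldExtType F) (n : nat)
  (a : 'I_n -> F) (x : 'rV[L]_n) : L :=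
  \sum_(i < n) (a i)%:A * (x 0 i) ^+ 2.

(* c is a similarity factor of q_L, i.e. q_L is isometric to c q_L:
   there is an invertible L-linear map T of L^n with q_L(x T) = c q_L(x). *)
Definition similarity_factor (F : fieldType) (L : fieldExtType F) (n : nat)
  (a : 'I_n -> F) (c : L) : Prop :=
  c != 0 /\ exists T : 'M[L]_n, T \in unitmx /\
    forall x : 'rV[L]_n, qformL a (x *m T) = c * qformL a x.

From HB Require Import structures.
From mathcomp Require Import all_boot all_order all_algebra all_field.
Set Implicit Arguments. Unset Strict Implicit. Unset Printing Implicit Defensive.
Import GRing.Theory.
Local Open Scope ring_scope.

(* Put K = F(lambda) and
   suppose L/K is separable; we show K/F is separable.  By the derivation
   criterion it suffices that every derivation D of K vanishing on F kills
   lambda.  Since L/K is separable, D extends to a derivation D' of L.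
   In characteristic 2 a derivation of L kills every value of the totally
   singular form q_L, because D'(a y^2) = 2 a y D'(y) = 0.  Choosing a
   coefficient a_j != 0 and evaluating q_L(x T) = lambda q_L(x) at the unit
   vector x = e_j gives D'(lambda) a_j = 0, hence D(lambda) = D'(lambda) = 0.
   The file first proves the general facts on derivations (extension along
   separable extensions, vanishing on a simple extension), then the
   characteristic-2 facts on q_L, and derives the theorem from them. *)

Section Derivations.
Variables (F : fieldType) (L : fieldExtType F).
Implicit Types (K : {subfield L}) (D : 'End(L)).

Lemma separable_extend_derivation K D :
  separable K fullv -> Derivation K D ->
  exists2 D' : 'End(L), Derivation fullv D' & {in K, D' =1 D}.
Proof.
move=> sepKL derD; pose z := separable_generator K (aspacef L).
exists (extendDerivation z D K); last by move=> y; apply: extendDerivation_id.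
apply: DerivationS (sub_adjoin_separable_generator sepKL) _.
exact/extendDerivationP/separable_generatorP.
Qed.

(* A derivation of K(x) vanishing on K and on x vanishes on all of K(x),
   as every element of K(x) is a polynomial over K evaluated at x. *)
Lemma derivation_adjoin_vanish K x D :
  Derivation <<K; x>> D -> (K <= lker D)%VS -> D x = 0 ->
  (<<K; x>> <= lker D)%VS.
Proof.
move=> derD /subvP DK0 Dx0; apply/subvP => _ /Fadjoin_polyP[p Kp ->].
have Dp0 : map_poly D p = 0.
  apply/polyP => i; rewrite coef_map coef0 /=.
  by apply/eqP; rewrite -memv_ker DK0 // (polyOverP Kp).
rewrite memv_ker (Derivation_horner derD) ?memv_adjoin //; last first.
  exact: (polyOverSv (subv_adjoin K x) Kp).
by rewrite Dx0 Dp0 horner0 mulr0 addr0.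
Qed.

End Derivations.

Section TotallySingular.
Variables (F : fieldType) (L : fieldExtType F) (n : nat) (a : 'I_n -> F).
Implicit Types (D : 'End(L)) (x : 'rV[L]_n) (c : L).

Lemma qformL_delta j : qformL a (delta_mx 0 j : 'rV[L]_n) = (a j)%:A.
Proof.
rewrite /qformL (bigD1 j) //= big1 ?addr0 => [|i ij].
  by rewrite mxE !eqxx /= expr1n mulr1.
by rewrite mxE (negbTE ij) andbF /= expr0n /= mulr0.
Qed.

Hypothesis char2 : 2%N \in [pchar F].

Lemma natr2_ext : (2%:R : L) = 0.
Proof. by apply: pcharf0; rewrite pchar_lalg. Qed.

(* In characteristic 2 every derivation of L kills the values of q_L: these
   lie in the subfield F L^2, on which derivations vanish. *)
Lemma derivation_qformL D x : Derivation fullv D -> D (qformL a x) = 0.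
Proof.
move=> derD; rewrite /qformL linear_sum /= big1 // => i _.
rewrite mulrC -scalerAr linearZ /= mulr1 (Derivation_exp derD) ?memvf //.
by rewrite mulrnAl -mulr_natr natr2_ext mulr0 scaler0.
Qed.

(* Hence every derivation of L kills every similarity factor of q_L
   (q non-zero): differentiate q_L(e_j T) = c a_j with a_j != 0. *)
Lemma derivation_similarity_factor D c :
  (exists j, a j != 0) -> similarity_factor a c -> Derivation fullv D ->
  D c = 0.
Proof.
move=> [j aj0] [_ [T [_ simT]]] derD.
have := congr1 D (simT (delta_mx 0 j)).
rewrite derivation_qformL // qformL_delta (Derivation_mul derD) ?memvf //.
rewrite [D _%:A](Derivation_scalar derD) ?rpredZ ?mem1v // mulr0 addr0.
move/esym/eqP; rewrite mulf_eq0 scaler_eq0 oner_eq0 orbF (negbTE aj0) orbF.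
by move/eqP.
Qed.

End TotallySingular.

Theorem lemma7p1 (F : fieldType) (L : fieldExtType F) (n : nat)
  (a : 'I_n -> F) (lambda : L) :
  2%N \in [pchar F] ->
  (exists i, a i != 0) ->
  lambda != 0 ->
  similarity_factor a lambda ->
  separable 1%VS <<1%VS; lambda>>%VS \/ ~~ separable <<1%VS; lambda>>%VS fullv.
Proof.
move=> char2 a_nz _ sim.
have [sepKL|] := boolP (separable <<1%VS; lambda>>%VS fullv); last by right.
left; rewrite -adjoin_separable_eq; apply/Derivation_separableP => D derD DF0.
have [D' derD' D'_ext] := separable_extend_derivation sepKL derD.
apply: derivation_adjoin_vanish derD DF0 _.
by rewrite -D'_ext ?memv_adjoin // (derivation_similarity_factor char2 a_nz sim derD').
Qed.
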